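(* For any $K>0$ and $\varepsilon>0$ there exists $\alpha=\alpha(\varepsilon,K)>0$ such that the following holds. Let $(\Sigma,f,E,A)$ be a two-dimensional periodic linear cocycle, bounded by $K$, such that at every point the return map is diagonalizable with real, positive, distinct eigenvalues. Suppose there is $X\in\Sigma$ at which the angle between the two eigenspaces of $A^{\mathrm{per}(X)}(X)$ is less than $\alpha$. Then there exists a continuous path $\gamma:[0,1]\to C(X)$ such that: (1) $\gamma(0)=A|_{\mathcal{O}(X)}$; (2) $\mathrm{diam}(\gamma)<\varepsilon$; (3) $\det\widetilde{\gamma(t)}$ is independent of $t$; (4) writing $\lambda_m(t)\le\lambda_b(t)$ for the absolute values of the eigenvalues of $\widetilde{\gamma(t)}$, for $s<t$ one has $\lambda_m(s)\le\lambda_m(t)$ and $\lambda_b(s)\ge\lambda_b(t)$; (5) $\widetilde{\gamma(1)}$ has two non-real complex eigenvalues.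
   Context: A linear cocycle $(\Sigma,f,E,A)$ consists of a topological space $\Sigma$, a homeomorphism $f$ of $\Sigma$, a Riemannian vector bundle $E$ over $\Sigma$ (here of rank $2$), and linear isomorphisms $A(x):E(x)\to E(f(x))$. It is periodic if every point is $f$-periodic, with return map $A^{\mathrm{per}(x)}(x)=A(f^{\mathrm{per}(x)-1}(x))\circ\cdots\circ A(x)$. It is bounded by $K$ if $\sup_x\|A(x)\|<K$ and $\sup_x\|A(x)^{-1}\|<K$. The angle between one-dimensional subspaces $V_1,V_2$ of $E(X)$ is the $\beta\in[0,\pi/2]$ with $\cos\beta=|(v_1,v_2)|/(|v_1||v_2|)$ for nonzero $v_i\in V_i$. For $X\in\Sigma$ with orbit $\mathcal{O}(X)$ and period $p$, $C(X)$ is the set of families $\sigma=(\sigma(x))_{x\in\mathcal{O}(X)}$ of linear isomorphisms $\sigma(x):E(x)\to E(f(x))$, with distance $\mathrm{dist}(\sigma_1,\sigma_2)=\max\{\max_x\|\sigma_1(x)-\sigma_2(x)\|,\max_x\|\sigma_1(x)^{-1}-\sigma_2(x)^{-1}\|\}$; $\mathrm{diam}(\gamma)=\max_{s,t}\mathrm{dist}(\gamma(s),\gamma(t))$; $\tilde\sigma=\sigma(f^{p-1}(X))\circ\cdots\circ\sigma(X)$. *)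

From HB Require Import structures.
From mathcomp Require Import all_boot all_order all_algebra.
From mathcomp Require Import complex.
From mathcomp Require Import all_classical all_reals all_analysis.
Set Implicit Arguments. Unset Strict Implicit. Unset Printing Implicit Defensive.
Import Order.TTheory GRing.Theory Num.Theory.
Local Open Scope ring_scope.
Local Open Scope classical_set_scope.

(* Fibres of the rank-2 Riemannian bundle are identified (via orthonormal frames)
   with R^2 (column vectors 'cV[R]_2) carrying the Euclidean inner product. *)

Definition inner {R : realType} (u v : 'cV[R]_2) : R := \sum_(i < 2) u i 0 * v i 0.
Definition vnorm {R : realType} (v : 'cV[R]_2) : R := Num.sqrt (inner v v).

Definition opnorm {R : realType} (M : 'M[R]_2) : R :=
  sup [set vnorm (M *m v) | v in [set v : 'cV[R]_2 | vnorm v = 1]].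

Definition angle {R : realType} (u v : 'cV[R]_2) : R :=
  acos (`|inner u v| / (vnorm u * vnorm v)).

Definition is_period {S : Type} (f : S -> S) (x : S) (p : nat) : Prop :=
  (0 < p)%N /\ iter p f x = x /\ (forall q, (0 < q < p)%N -> iter q f x <> x).

(* composition s (p-1) o ... o s 1 o s 0, as a matrix product *)
Definition retmap {R : realType} (p : nat) (s : nat -> 'M[R]_2) : 'M[R]_2 :=
  \prod_(i < p) s (p.-1 - i)%N.

(* A family sigma in C(X), X of period p: sigma k : E(f^k X) -> E(f^(k+1) X), k < p,
   all linear isomorphisms.  (Values at k >= p are irrelevant.) *)
Definition in_CX {R : realType} (p : nat) (s : nat -> 'M[R]_2) : Prop :=
  forall k, (k < p)%N -> s k \in unitmx.

Definition distC {R : realType} (p : nat) (s1 s2 : nat -> 'M[R]_2) : R :=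
  Num.max (\big[Num.max/0]_(k < p) opnorm (s1 k - s2 k))
          (\big[Num.max/0]_(k < p) opnorm (invmx (s1 k) - invmx (s2 k))).

Definition cmod {R : realType} (z : R[i]) : R := Num.sqrt (complex.Re z ^+ 2 + complex.Im z ^+ 2).

Definition eigpair {R : realType} (M : 'M[R]_2) (z1 z2 : R[i]) : Prop :=
  char_poly (map_mx (fun x : R => x%:C%C) M) = ('X - z1%:P) * ('X - z2%:P).

From HB Require Import structures.
From mathcomp Require Import all_boot all_order all_algebra.
From mathcomp Require Import complex.
From mathcomp Require Import all_classical all_reals all_analysis.
From mathcomp Require Import ring lra.
Set Implicit Arguments. Unset Strict Implicit. Unset Printing Implicit Defensive.
Import Order.TTheory GRing.Theory Num.Theory.
Local Open Scope ring_scope.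
Local Open Scope classical_set_scope.

(* Let B be the return map at X, with eigenvectors v1, v2 for the eigenvalues
   0 < l1 <> l2.  Perturb only the first map of the orbit, A(X) ~> A(X) (1 + t N),
   by the nilpotent shear N = n v1^perp v1^T.  Then det (1 + t N) = 1, while
   tr (B (1 + t N)) = l1 + l2 + t n <v1, B v1^perp>, so a suitable n makes the trace
   decrease linearly from l1 + l2 to 2 min (l1, l2) < 2 sqrt (l1 l2).  With the
   determinant fixed, lowering the trace pushes the moduli of the two eigenvalues
   towards each other, and at the end they are complex conjugate.  Expanding v1^perp
   in the basis v1, v2 gives |n| |v1|^2 = |v1 x v2| / |<v1, v2>|, the tangent of the
   angle between the eigenvectors; hence the path has diameter at most
   K tan (angle) < eps once the angle is below atan (eps / K). *)

Lemma ord2P (i : 'I_2) : i = 0 \/ i = 1.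
Proof. by case: i => [[|[|//]] ?]; [left | right]; apply: val_inj. Qed.

Lemma lift0_ord1 : lift 0 (0 : 'I_1) = 1 :> 'I_2.
Proof. exact: val_inj. Qed.

Section MatrixTwo.
Variable F : comNzRingType.

Lemma mulmx2E m n (M : 'M[F]_(m, 2)) (N : 'M[F]_(2, n)) i j :
  (M *m N) i j = M i 0 * N 0 j + M i 1 * N 1 j.
Proof. by rewrite mxE big_ord_recl big_ord1 lift0_ord1. Qed.

Lemma mxtrace2 (M : 'M[F]_2) : \tr M = M 0 0 + M 1 1.
Proof. by rewrite /mxtrace big_ord_recl big_ord1 lift0_ord1. Qed.

Lemma det_mx2 (M : 'M[F]_2) : \det M = M 0 0 * M 1 1 - M 0 1 * M 1 0.
Proof.
rewrite (expand_det_row _ 0) big_ord_recl big_ord1 /cofactor !det_mx11 !mxE /= lift0_ord1.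
have -> : lift 1 (0 : 'I_1) = 0 :> 'I_2 by apply: val_inj.
by rewrite expr0 expr1; ring.
Qed.

Lemma char_poly2 (M : 'M[F]_2) :
  char_poly M = 'X^2 - (\tr M)%:P * 'X + (\det M)%:P.
Proof.
apply/polyP => i; rewrite coefD coefB coefXn coefCM coefX coefC.
case: i => [|[|[|i]]] /=.
- by rewrite char_poly_det expr2 mulrNN mulr1 mul1r; ring.
- by rewrite char_poly_trace //; ring.
- by move/monicP: (char_poly_monic M); rewrite /lead_coef size_char_poly => ->; ring.
- by rewrite nth_default ?size_char_poly //; ring.
Qed.

Lemma mul_linear_factors (z1 z2 : F) :
  ('X - z1%:P) * ('X - z2%:P) = 'X^2 - (z1 + z2)%:P * 'X + (z1 * z2)%:P.
Proof. by rewrite polyCD polyCM; ring. Qed.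

Lemma monic_quadratic_inj (a b c d : F) :
  'X^2 - a%:P * 'X + b%:P = 'X^2 - c%:P * 'X + d%:P -> a = c /\ b = d.
Proof.
have coef1 (x y : F) : ('X^2 - x%:P * 'X + y%:P)`_1 = - x.
  by rewrite coefD coefB coefXn coefCM coefX coefC /=; ring.
have coef0 (x y : F) : ('X^2 - x%:P * 'X + y%:P)`_0 = y.
  by rewrite coefD coefB coefXn coefCM coefX coefC /=; ring.
move=> E; split; first by apply: oppr_inj; rewrite -(coef1 a b) E coef1.
by rewrite -(coef0 a b) E coef0.
Qed.

End MatrixTwo.

Section EuclideanPlane.
Variable R : realType.
Implicit Types (u v w : 'cV[R]_2) (M N : 'M[R]_2).

Definition cross u v : R := u 0 0 * v 1 0 - u 1 0 * v 0 0.

Definition perp v : 'cV[R]_2 := \col_i (if i == 0 then - v 1 0 else v 0 0).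

Lemma perpE v : perp v 0 0 = - v 1 0 /\ perp v 1 0 = v 0 0.
Proof. by rewrite !mxE. Qed.

Lemma innerE u v : inner u v = u 0 0 * v 0 0 + u 1 0 * v 1 0.
Proof. by rewrite /inner big_ord_recl big_ord1 lift0_ord1. Qed.

Lemma lagrange_identity u v : inner u u * inner v v = inner u v ^+ 2 + cross u v ^+ 2.
Proof. by rewrite !innerE /cross; ring. Qed.

Lemma perp_decomp u v : inner u u *: v = inner u v *: u + cross u v *: perp u.
Proof.
have [p0 p1] := perpE u.
by apply/colP => i; case: (ord2P i) => ->; rewrite !mxE ?p0 ?p1 !innerE /cross /=; ring.
Qed.

Lemma inner_ge0 v : 0 <= inner v v.
Proof. by rewrite innerE addr_ge0 // -expr2 sqr_ge0. Qed.

Lemma inner_eq0 v : inner v v = 0 -> v = 0.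
Proof.
rewrite innerE => v0; have x0 : v 0 0 = 0 by nra.
have y0 : v 1 0 = 0 by nra.
by apply/colP => i; case: (ord2P i) => ->; rewrite mxE.
Qed.

Lemma inner_gt0 v : v != 0 -> 0 < inner v v.
Proof. by move=> v0; rewrite lt0r inner_ge0 andbT; apply: contra v0 => /eqP/inner_eq0 ->. Qed.

Lemma vnorm_ge0 v : 0 <= vnorm v.
Proof. exact: sqrtr_ge0. Qed.

Lemma vnorm_sqr v : vnorm v ^+ 2 = inner v v.
Proof. by rewrite sqr_sqrtr // inner_ge0. Qed.

Lemma vnormZ (a : R) v : vnorm (a *: v) = `|a| * vnorm v.
Proof.
rewrite /vnorm (_ : inner _ _ = a ^+ 2 * inner v v); last by rewrite !innerE !mxE; ring.
by rewrite sqrtrM ?sqr_ge0 // sqrtr_sqr.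
Qed.

Lemma innerDr u v w : inner u (v + w) = inner u v + inner u w.
Proof. by rewrite !innerE !mxE; ring. Qed.

Lemma innerZr (a : R) u v : inner u (a *: v) = a * inner u v.
Proof. by rewrite !innerE !mxE; ring. Qed.

Lemma crossZl (a : R) u v : cross (a *: u) v = a * cross u v.
Proof. by rewrite /cross !mxE; ring. Qed.

Lemma crossZr (a : R) u v : cross u (a *: v) = a * cross u v.
Proof. by rewrite /cross !mxE; ring. Qed.

Lemma cross_mulmx_tr M u v : cross (M *m u) v + cross u (M *m v) = \tr M * cross u v.
Proof. by rewrite /cross mxtrace2 !mulmx2E; ring. Qed.

Lemma cross_mulmx_det M u v : cross (M *m u) (M *m v) = \det M * cross u v.
Proof. by rewrite /cross det_mx2 !mulmx2E; ring. Qed.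

Lemma cauchy_schwarz u v : `|inner u v| <= vnorm u * vnorm v.
Proof.
rewrite -sqrtrM ?inner_ge0 // -sqrtr_sqr lagrange_identity.
by apply: ler_wsqrtr; rewrite lerDl sqr_ge0.
Qed.

Lemma vnorm_perp v : vnorm (perp v) = vnorm v.
Proof. by have [p0 p1] := perpE v; rewrite /vnorm !innerE p0 p1; congr Num.sqrt; ring. Qed.

Lemma vnorm0 : vnorm (0 : 'cV[R]_2) = 0.
Proof. by rewrite /vnorm innerE !mxE mulr0 addr0 sqrtr0. Qed.

Lemma has_ubound_unit_image M : has_ubound [set vnorm (M *m v) | v in [set v | vnorm v = 1]].
Proof.
exists (Num.sqrt (M 0 0 ^+ 2 + M 0 1 ^+ 2 + M 1 0 ^+ 2 + M 1 1 ^+ 2)) => _ [v /= v1 <-].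
apply: ler_wsqrtr; move: v1 => /(congr1 (fun x => x ^+ 2)); rewrite vnorm_sqr expr1n.
rewrite !innerE !mulmx2E => v1.
have := sqr_ge0 (M 0 0 * v 1 0 - M 0 1 * v 0 0).
have := sqr_ge0 (M 1 0 * v 1 0 - M 1 1 * v 0 0).
nra.
Qed.

Lemma vnorm_delta : vnorm (delta_mx 0 0 : 'cV[R]_2) = 1.
Proof. by rewrite /vnorm innerE !mxE /= mulr1 mulr0 addr0 sqrtr1. Qed.

Lemma opnorm_ub_unit M v : vnorm v = 1 -> vnorm (M *m v) <= opnorm M.
Proof. by move=> v1; apply: (ub_le_sup (has_ubound_unit_image M)); exists v. Qed.

Lemma opnorm_le M c :
  (forall v, vnorm v = 1 -> vnorm (M *m v) <= c) -> opnorm M <= c.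
Proof.
move=> Mc; apply: ge_sup => [|_ [v /= v1 <-]]; last exact: Mc.
by exists (vnorm (M *m delta_mx 0 0)), (delta_mx 0 0); rewrite //= vnorm_delta.
Qed.

Lemma opnorm_ge0 M : 0 <= opnorm M.
Proof.
exact: le_trans (vnorm_ge0 _) (opnorm_ub_unit M vnorm_delta).
Qed.

Lemma opnorm_ub M v : vnorm (M *m v) <= opnorm M * vnorm v.
Proof.
have [v0|v_neq0] := eqVneq (vnorm v) 0.
  by rewrite (@inner_eq0 v) ?mulmx0 ?vnorm0 ?mulr0 // -vnorm_sqr v0 expr0n.
have v_gt0 : 0 < vnorm v by rewrite lt0r v_neq0 vnorm_ge0.
have := opnorm_ub_unit M (v := (vnorm v)^-1 *: v).
rewrite -scalemxAr !vnormZ ger0_norm ?invr_ge0 ?vnorm_ge0 // mulVf // => /(_ erefl).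
by rewrite ler_pdivrMl // mulrC.
Qed.

Lemma opnorm_mulmx M N : opnorm (M *m N) <= opnorm M * opnorm N.
Proof.
apply: opnorm_le => v v1; rewrite -mulmxA.
apply: le_trans (opnorm_ub _ _) _; apply: ler_wpM2l; first exact: opnorm_ge0.
by have := opnorm_ub N v; rewrite v1 mulr1.
Qed.

Lemma opnormZ (a : R) M : opnorm (a *: M) <= `|a| * opnorm M.
Proof.
by apply: opnorm_le => v v1; rewrite -scalemxAl vnormZ ler_wpM2l // opnorm_ub_unit.
Qed.

Lemma opnorm0 : opnorm (0 : 'M[R]_2) = 0.
Proof.
by apply/eqP; rewrite eq_le opnorm_ge0 andbT; apply: opnorm_le => v _; rewrite mul0mx vnorm0.
Qed.

End EuclideanPlane.

Section Inverses.
Variables (R : comUnitRingType) (n : nat).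
Implicit Types A B N : 'M[R]_n.

Lemma mulmx1_invmx A B : A *m B = 1%:M -> invmx A = B.
Proof.
move=> AB; have [uA _] := mulmx1_unit AB.
by have := congr1 (mulmx (invmx A)) AB; rewrite mulKmx // mulmx1 => ->.
Qed.

Lemma invmx_mulmx A B : A \in unitmx -> B \in unitmx ->
  invmx (A *m B) = invmx B *m invmx A.
Proof.
move=> uA uB; apply: mulmx1_invmx.
by rewrite mulmxA -(mulmxA A) mulmxV // mulmx1 mulmxV.
Qed.

Variable N : 'M[R]_n.
Hypothesis N_nil : N *m N = 0.

Lemma unipotent_mulmx_inv (t : R) : (1%:M + t *: N) *m (1%:M - t *: N) = 1%:M.
Proof.
rewrite mulmxDl !mulmxBr !mul1mx mulmx1 -scalemxAl -scalemxAr N_nil !scaler0.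
by rewrite subr0 addrNK.
Qed.

Lemma unipotent_unit (t : R) : 1%:M + t *: N \in unitmx.
Proof. by case: (mulmx1_unit (unipotent_mulmx_inv t)). Qed.

Lemma invmx_unipotent (t : R) : invmx (1%:M + t *: N) = 1%:M - t *: N.
Proof. exact/mulmx1_invmx/unipotent_mulmx_inv. Qed.

End Inverses.

Lemma mxtrace_mulmx_unipotent (R : comNzRingType) n (B N : 'M[R]_n) (t : R) :
  \tr (B *m (1%:M + t *: N)) = \tr B + t * \tr (B *m N).
Proof. by rewrite mulmxDr mulmx1 -scalemxAr mxtraceD mxtraceZ. Qed.

Lemma distC_le (R : realType) p (s1 s2 : nat -> 'M[R]_2) b : 0 <= b ->
  (forall k, (k < p)%N ->
     opnorm (s1 k - s2 k) <= b /\ opnorm (invmx (s1 k) - invmx (s2 k)) <= b) ->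
  distC p s1 s2 <= b.
Proof.
move=> b0 sb; rewrite /distC ge_max.
by apply/andP; split; apply: bigmax_le => // k _; case: (sb k (ltn_ord k)).
Qed.

Lemma lipschitz_continuous (R : realType) (T : Type) (d : T -> T -> R) (g : R -> T) L :
  0 <= L -> (forall s t, d (g s) (g t) <= `|s - t| * L) ->
  forall t e, 0 < e -> exists2 r, 0 < r & forall s, `|s - t| < r -> d (g s) (g t) < e.
Proof.
move=> L0 gL t e e0; have L1 : 0 < L + 1 by rewrite ltr_pwDr.
exists (e / (L + 1)) => [|s st]; first by rewrite divr_gt0.
apply: le_lt_trans (gL s t) _; rewrite ltr_pdivlMr // in st.
by apply: le_lt_trans st; rewrite ler_wpM2l // lerDl.
Qed.

Section ShearPath.
Variables (R : realType) (s : nat -> 'M[R]_2) (N : 'M[R]_2).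

Definition shear_path (t : R) (k : nat) : 'M[R]_2 :=
  if k == 0%N then s 0%N *m (1%:M + t *: N) else s k.

Lemma shear_path0 k : shear_path 0 k = s k.
Proof. by rewrite /shear_path scale0r addr0 mulmx1; case: eqP => // ->. Qed.

Hypothesis N_nil : N *m N = 0.

Lemma shear_path_in_CX p t : in_CX p s -> in_CX p (shear_path t).
Proof.
move=> sU [|k] kp; rewrite /shear_path /=; last exact: sU.
by rewrite unitmx_mul sU // unipotent_unit.
Qed.

Lemma retmap_shear_path p t : (0 < p)%N ->
  retmap p (shear_path t) = retmap p s *m (1%:M + t *: N).
Proof.
case: p => // p _; rewrite /retmap !big_ord_recr /= subnn /shear_path /=.
rewrite mulmxE mulrA; congr (_ * _ * _); apply: eq_bigr => i _.
by rewrite subn_eq0 leqNgt ltn_ord.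
Qed.

Lemma distC_shear_path p K t1 t2 :
  s 0%N \in unitmx -> opnorm (s 0%N) <= K -> opnorm (invmx (s 0%N)) <= K ->
  distC p (shear_path t1) (shear_path t2) <= `|t1 - t2| * (K * opnorm N).
Proof.
move=> sU sK siK; have K0 : 0 <= K := le_trans (opnorm_ge0 _) sK.
have bound : 0 <= `|t1 - t2| * (K * opnorm N) by rewrite !mulr_ge0 ?opnorm_ge0.
have dN a b : (1%:M + a *: N) - (1%:M + b *: N) = (a - b) *: N.
  by rewrite opprD addrACA subrr add0r scalerBl.
have dNV a b : (1%:M - a *: N) - (1%:M - b *: N) = (b - a) *: N.
  by rewrite opprD opprK addrACA subrr add0r addrC -scalerBl.
apply: distC_le => // -[|k] _; rewrite /shear_path /=; last first.
  by rewrite !subrr opnorm0.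
rewrite !invmx_mulmx ?unipotent_unit // !invmx_unipotent // -mulmxBr -mulmxBl.
rewrite dN dNV; split; apply: le_trans (opnorm_mulmx _ _) _.
- by rewrite mulrCA; apply: ler_pM; rewrite ?opnorm_ge0 ?opnormZ.
- by rewrite [K * _]mulrC mulrA distrC; apply: ler_pM; rewrite ?opnorm_ge0 ?opnormZ.
Qed.

End ShearPath.

Section Shear.
Variable R : realType.
Implicit Types (v w : 'cV[R]_2) (B : 'M[R]_2).

Definition shear (n : R) v : 'M[R]_2 := n *: (perp v *m v^T).

Lemma shearE n v i j : shear n v i j = n * (perp v i 0 * v j 0).
Proof. by rewrite /shear mxE mxE big_ord1 !mxE. Qed.

Lemma shear_mulmx n v w : shear n v *m w = (n * inner v w) *: perp v.
Proof.
by apply/colP => i; rewrite mulmx2E !shearE innerE [RHS]mxE; ring.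
Qed.

Lemma shear_nil n v : shear n v *m shear n v = 0.
Proof.
have [p0 p1] := perpE v.
by apply/matrixP => i j; rewrite mulmx2E !shearE p0 p1 !mxE; ring.
Qed.

Lemma det_unipotent_shear n v (t : R) : \det (1%:M + t *: shear n v) = 1.
Proof. by rewrite det_mx2 !mxE !big_ord1 !mxE /=; ring. Qed.

Lemma mxtrace_mulmx_shear B n v : \tr (B *m shear n v) = n * inner v (B *m perp v).
Proof. by rewrite mxtrace2 !mulmx2E !shearE innerE !mulmx2E; ring. Qed.

Lemma opnorm_shear n v : opnorm (shear n v) <= `|n| * inner v v.
Proof.
apply: opnorm_le => w w1; rewrite shear_mulmx vnormZ vnorm_perp normrM.
rewrite -vnorm_sqr expr2 mulrA ler_wpM2r ?vnorm_ge0 // ler_wpM2l //.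
by rewrite -[leRHS]mulr1 -w1 cauchy_schwarz.
Qed.

End Shear.

Lemma similar_diag_pos_tr_det (R : realType) (B P D : 'M[R]_2) :
  P \in unitmx -> is_diag_mx D -> B = P *m D *m invmx P ->
  0 < D 0 0 -> 0 < D 1 1 -> 0 < \tr B /\ 0 < \det B.
Proof.
move=> P_unit /is_diag_mxP D_diag -> d0 d1.
rewrite mxtrace_mulC mulmxA mulVmx // mul1mx !det_mulmx mulrAC -det_mulmx.
rewrite mulmxV // det1 mul1r mxtrace2 det_mx2 (D_diag 0 1) // (D_diag 1 0) //.
by rewrite mulr0 subr0 addr_gt0 // mulr_gt0.
Qed.

Section EigenvectorShear.
Variables (R : realType) (B : 'M[R]_2) (l1 l2 : R) (v1 v2 : 'cV[R]_2).
Hypotheses (Bv1 : B *m v1 = l1 *: v1) (Bv2 : B *m v2 = l2 *: v2).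
Hypotheses (l12 : l1 != l2) (v1_neq0 : v1 != 0) (v2_neq0 : v2 != 0).

Lemma cross_eigvecs_neq0 : cross v1 v2 != 0.
Proof.
apply/eqP => D0; have := perp_decomp v1 v2; rewrite D0 scale0r addr0 => dec.
have := congr1 (mulmx B) dec; rewrite -!scalemxAr Bv1 Bv2.
rewrite [RHS]scalerA [_ * l1]mulrC -scalerA -dec !scalerA [l1 * _]mulrC => /eqP.
rewrite -subr_eq0 -scalerBl scaler_eq0 (negbTE v2_neq0) orbF -mulrBr mulf_eq0.
by rewrite subr_eq0 [l2 == l1]eq_sym (negbTE l12) orbF gt_eqF // inner_gt0.
Qed.

Lemma eigvecs_tr_det : \tr B = l1 + l2 /\ \det B = l1 * l2.
Proof.
have D0 := cross_eigvecs_neq0; split; apply: (mulIf D0).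
  by rewrite -cross_mulmx_tr Bv1 Bv2 crossZl crossZr mulrDl.
by rewrite -cross_mulmx_det Bv1 Bv2 crossZl crossZr mulrA.
Qed.

Lemma eigvals_gt0 (P D : 'M[R]_2) : P \in unitmx -> is_diag_mx D ->
  B = P *m D *m invmx P -> 0 < D 0 0 -> 0 < D 1 1 -> 0 < l1 /\ 0 < l2.
Proof.
move=> P_unit D_diag BPD d0 d1; have [trB detB] := eigvecs_tr_det.
have := similar_diag_pos_tr_det P_unit D_diag BPD d0 d1; rewrite trB detB.
by case=> ? ?; split; nra.
Qed.

Lemma cross_mul_shear_coef :
  cross v1 v2 * inner v1 (B *m perp v1) = inner v1 v1 * inner v1 v2 * (l2 - l1).
Proof.
have := congr1 (fun w => inner v1 (B *m w)) (perp_decomp v1 v2).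
rewrite /= !mulmxDr -!scalemxAr Bv1 Bv2 innerDr !innerZr => E.
by apply: (addrI (inner v1 v2 * (l1 * inner v1 v1))); rewrite -E; ring.
Qed.

Lemma shear_lowers_trace (tau : R) : `|cross v1 v2| < tau * `|inner v1 v2| ->
  exists n, \tr (B *m shear n v1) = - `|l1 - l2| /\ opnorm (shear n v1) < tau.
Proof.
set c := inner v1 (B *m perp v1); set g := inner v1 v2; set V := inner v1 v1.
move=> small; have key : cross v1 v2 * c = V * g * (l2 - l1) := cross_mul_shear_coef.
have V_gt0 : 0 < V := inner_gt0 v1_neq0.
have g_neq0 : g != 0.
  by apply: contraTneq small => ->; rewrite normr0 mulr0 ltNge normr_ge0.
have rhs_neq0 : V * g * (l2 - l1) != 0.
  by rewrite !mulf_neq0 ?(gt_eqF V_gt0) // subr_eq0 eq_sym.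
have c_neq0 : c != 0 by apply: contraNneq rhs_neq0 => c0; rewrite -key c0 mulr0.
exists (- `|l1 - l2| / c); split; first by rewrite mxtrace_mulmx_shear divfK.
apply: le_lt_trans (opnorm_shear _ _) _.
have nVg : `|- `|l1 - l2| / c| * V * `|g| = `|cross v1 v2|.
  have c_norm_neq0 : `|c| != 0 by rewrite normr_eq0.
  apply: (mulIf c_norm_neq0); rewrite -normrM key !normrM normrN normr_id normfV.
  by rewrite (ger0_norm (ltW V_gt0)) distrC; field.
have g_gt0 : 0 < `|g| by rewrite normr_gt0.
by rewrite -(ltr_pM2r g_gt0) nVg.
Qed.

End EigenvectorShear.

Section EigenvaluePair.
Variable R : realType.
Local Open Scope complex_scope.

Lemma eigpairP (M : 'M[R]_2) z1 z2 :
  eigpair M z1 z2 <-> z1 + z2 = (\tr M)%:C /\ z1 * z2 = (\det M)%:C.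
Proof.
rewrite /eigpair -[map_mx _ M]/(map_mx (real_complex R) M) -map_char_poly.
rewrite char_poly2 mul_linear_factors.
rewrite rmorphD rmorphB rmorphXn rmorphM /= !map_polyC map_polyX /=.
split; first by move/monic_quadratic_inj => [-> ->].
by move=> [-> ->].
Qed.

End EigenvaluePair.

Section EigenvalueModuli.
Variable R : realType.

(* [x] and [y] are the moduli of the roots of X^2 - tau X + d: either both roots
   are real and nonnegative, or they are complex conjugate. *)
Definition moduli_spec (tau d x y : R) :=
  [/\ 0 <= x, 0 <= y, x * y = d & x + y = tau \/ x = y /\ tau ^+ 2 < 4 * d].

Lemma moduli_spec_sym tau d x y : moduli_spec tau d x y -> moduli_spec tau d y x.
Proof.
case=> x0 y0 xy s; split=> //; first by rewrite mulrC.
by case: s => [s|[-> ?]]; [left; rewrite addrC | right].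
Qed.

Lemma moduli_spec_minmax tau d x y : moduli_spec tau d x y ->
  moduli_spec tau d (Num.min x y) (Num.max x y).
Proof.
by case: (leP x y) => // _; exact: moduli_spec_sym.
Qed.

Lemma fixed_product_spread (a b c e : R) : 0 <= a <= b -> 0 <= c <= e ->
  a * b = c * e -> c + e <= a + b -> a <= c /\ e <= b.
Proof.
move=> /andP[a0 ab] /andP[c0 ce] prod sum.
have ac : a <= c by rewrite leNgt; apply/negP => ca; nra.
split=> //; nra.
Qed.

Lemma moduli_spec_mono ts tt d xs ys xt yt : 0 < tt -> tt < ts ->
  moduli_spec ts d xs ys -> moduli_spec tt d xt yt ->
  Num.min xs ys <= Num.min xt yt /\ Num.max xt yt <= Num.max xs ys.
Proof.
move=> tt0 tts /moduli_spec_minmax + /moduli_spec_minmax.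
have min_le_max (x y : R) : Num.min x y <= Num.max x y by case: (leP x y) => [|/ltW].
have := min_le_max xs ys; have := min_le_max xt yt.
move: (Num.min xs ys) (Num.max xs ys) (Num.min xt yt) (Num.max xt yt) => a b c e ce ab.
case=> a0 b0 abd [sab|[ab' sd]] [c0 e0 ced [sce|[ce' td]]].
- by apply: fixed_product_spread; rewrite ?a0 ?c0 ?abd ?ced //=; lra.
- by rewrite -ce'; split; nra.
- have := sqr_ge0 (c - e); nra.
- by rewrite -ce'; split; nra.
Qed.

End EigenvalueModuli.

Section RealMatrixEigenvalues.
Variable R : realType.
Local Open Scope complex_scope.

Lemma eigpair_moduli (M : 'M[R]_2) z1 z2 : eigpair M z1 z2 ->
  0 < \det M -> 0 < \tr M -> moduli_spec (\tr M) (\det M) (cmod z1) (cmod z2).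
Proof.
move=> /eigpairP; set tau := \tr M; set d := \det M.
case: z1 z2 => [a b] [c e] [[sr si] [pr pi]] d0 t0; rewrite /cmod /=.
have e_def : e = - b by lra.
rewrite {}e_def sqrrN in pr pi *.
have [b0|b_neq0] := eqVneq b 0.
  rewrite b0 in pr *; have c_def : c = tau - a by lra.
  rewrite {}c_def in pr *.
  have a_gt0 : 0 < a by nra.
  have c_gt0 : 0 < tau - a by nra.
  rewrite expr0n /= !addr0 !sqrtr_sqr !gtr0_norm //.
  by split; [lra | lra | nra | left; ring].
have c_def : c = a.
  apply/eqP; rewrite -subr_eq0; apply: contraNT b_neq0 => ca.
  by apply/eqP; apply: (mulIf ca); rewrite mul0r; lra.
rewrite {}c_def in sr pr *.
have d_def : a ^+ 2 + b ^+ 2 = d by nra.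
rewrite d_def; split; rewrite ?sqrtr_ge0 -?expr2 ?sqr_sqrtr ?(ltW d0) //.
have b2_gt0 : 0 < b ^+ 2 by rewrite exprn_even_gt0.
by right; split; nra.
Qed.

Lemma eigpair_moduli_mono (M M' : 'M[R]_2) z1 z2 w1 w2 :
  eigpair M z1 z2 -> eigpair M' w1 w2 -> \det M' = \det M -> 0 < \det M ->
  0 < \tr M' -> \tr M' < \tr M ->
  Num.min (cmod z1) (cmod z2) <= Num.min (cmod w1) (cmod w2) /\
  Num.max (cmod w1) (cmod w2) <= Num.max (cmod z1) (cmod z2).
Proof.
move=> Mz Mw dM d0 t0 tlt; apply: (moduli_spec_mono t0 tlt).
  exact: eigpair_moduli Mz d0 (lt_trans t0 tlt).
by rewrite -dM; apply: eigpair_moduli; rewrite ?dM.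
Qed.

Lemma eigpair_nonreal (M : 'M[R]_2) : \tr M ^+ 2 < 4 * \det M ->
  exists z1 z2, eigpair M z1 z2 /\ complex.Im z1 != 0 /\ complex.Im z2 != 0.
Proof.
set tau := \tr M; set d := \det M => disc.
have r_gt0 : 0 < d - tau ^+ 2 / 4 by rewrite subr_gt0 ltr_pdivrMr // mulrC.
set r := Num.sqrt (d - tau ^+ 2 / 4).
have r2 : r ^+ 2 = d - tau ^+ 2 / 4 by rewrite sqr_sqrtr // ltW.
have r_neq0 : r != 0 by rewrite sqrtr_eq0 -ltNge.
exists (tau / 2 +i* r), (tau / 2 +i* - r); split; last by rewrite /= oppr_eq0.
apply/eigpairP; rewrite -/tau -/d; split; apply/eqP; rewrite eq_complex /=; apply/andP; split; apply/eqP.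
- by rewrite -splitr.
- by rewrite subrr.
- by rewrite mulrN opprK; nra.
- by ring.
Qed.

End RealMatrixEigenvalues.

Section AngleBound.
Variable R : realType.

Lemma lt_acos (x y : R) : -1 <= x <= 1 -> -1 <= y <= 1 -> acos x < acos y -> y < x.
Proof.
move=> x1 y1 xy.
have acos_itv (z : R) : -1 <= z <= 1 -> acos z \in `[0, pi]%R.
  by move=> z1; rewrite in_itv /= acos_ge0 // acos_lepi.
have := ltr_cos (acos_itv x x1) (acos_itv y y1); rewrite xy.
by rewrite !acosK // in_itv.
Qed.

(* The angle whose tangent is [tau]. *)
Definition angle_bound (tau : R) : R := acos (Num.sqrt (1 + tau ^+ 2))^-1.

Lemma inv_sqrt1DX_itv (tau : R) : 0 < tau ->
  0 < (Num.sqrt (1 + tau ^+ 2))^-1 < 1.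
Proof.
move=> tau0; have s_gt1 : 1 < Num.sqrt (1 + tau ^+ 2).
  by rewrite -[X in X < _]sqrtr1 ltr_sqrt ?ltrDl ?exprn_gt0 // ltr_pwDl ?sqr_ge0.
by rewrite invr_gt0 invf_lt1 ?(lt_trans ltr01) ?s_gt1.
Qed.

Lemma angle_bound_gt0 (tau : R) : 0 < tau -> 0 < angle_bound tau.
Proof.
move=> /inv_sqrt1DX_itv /andP[r0 r1]; apply: acos_gt0.
by rewrite r1 andbT (le_trans _ (ltW r0)) // lerN10.
Qed.

Lemma cross_lt_of_angle (tau : R) (u v : 'cV[R]_2) : 0 < tau -> u != 0 -> v != 0 ->
  angle u v < angle_bound tau -> `|cross u v| < tau * `|inner u v|.
Proof.
move=> tau0 u0 v0; set r := (Num.sqrt (1 + tau ^+ 2))^-1.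
have /andP[r0 r1] := inv_sqrt1DX_itv tau0.
have r2 : r ^+ 2 * (1 + tau ^+ 2) = 1.
  by rewrite exprVn sqr_sqrtr ?addr_ge0 ?sqr_ge0 // mulVf // gt_eqF // ltr_pwDl // sqr_ge0.
set P := vnorm u * vnorm v.
have P0 : 0 < P by rewrite mulr_gt0 // lt0r vnorm_ge0 andbT /vnorm sqrtr_eq0 -ltNge inner_gt0.
have P2 : P ^+ 2 = inner u v ^+ 2 + cross u v ^+ 2.
  by rewrite exprMn !vnorm_sqr lagrange_identity.
have cos_itv : -1 <= `|inner u v| / P <= 1.
  rewrite ler_pdivrMr // mul1r cauchy_schwarz andbT.
  by rewrite (le_trans _ (divr_ge0 (normr_ge0 _) (ltW P0))) // lerN10.
have r_itv : -1 <= r <= 1 by rewrite (ltW r1) andbT (le_trans _ (ltW r0)) // lerN10.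
move=> /(lt_acos cos_itv r_itv); rewrite ltr_pdivlMr // => r_lt.
have sq_lt : (r * P) ^+ 2 < `|inner u v| ^+ 2.
  by rewrite !expr2 ltr_pM // mulr_ge0 // ltW.
have : (r * P) ^+ 2 * (1 + tau ^+ 2) < `|inner u v| ^+ 2 * (1 + tau ^+ 2).
  by rewrite ltr_pM2r // ltr_pwDl // sqr_ge0.
rewrite exprMn mulrAC r2 mul1r P2 real_normK ?num_real // => lagr.
rewrite -ltr_sqr; rewrite ?nnegrE ?normr_ge0 ?mulr_ge0 ?(ltW tau0) //.
by rewrite exprMn !real_normK ?num_real //; lra.
Qed.

End AngleBound.

Lemma normB_le1 (R : realDomainType) (s t : R) : 0 <= s <= 1 -> 0 <= t <= 1 ->
  `|s - t| <= 1.
Proof. by move=> /andP[? ?] /andP[? ?]; rewrite ler_norml; apply/andP; split; lra. Qed.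

Lemma normB_lt_add (R : realDomainType) (a b : R) : 0 < a -> 0 < b -> `|a - b| < a + b.
Proof. by move=> a0 b0; rewrite ltr_norml; apply/andP; split; lra. Qed.

Lemma sqr_add_sub_normB_lt (R : realDomainType) (a b : R) : 0 < a -> 0 < b -> a != b ->
  (a + b - `|a - b|) ^+ 2 < 4 * (a * b).
Proof.
move=> a0 b0 ab; have [a_le_b|b_lt_a] := leP a b.
  have a_lt_b : a < b by rewrite lt_neqAle ab.
  by rewrite ler0_norm ?subr_le0 //; nra.
by rewrite gtr0_norm ?subr_gt0 //; nra.
Qed.

Section TraceLoweringFamily.
Variables (R : realType) (M : R -> 'M[R]_2) (l1 l2 : R).
Hypotheses (l1_gt0 : 0 < l1) (l2_gt0 : 0 < l2) (l12 : l1 != l2).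
Hypotheses (trM : forall t, \tr (M t) = l1 + l2 - t * `|l1 - l2|).
Hypotheses (detM : forall t, \det (M t) = l1 * l2).

Lemma trace_lowering_moduli_mono (s t : R) : 0 <= s -> s < t -> t <= 1 ->
  forall z1 z2 w1 w2, eigpair (M s) z1 z2 -> eigpair (M t) w1 w2 ->
  Num.min (cmod z1) (cmod z2) <= Num.min (cmod w1) (cmod w2) /\
  Num.max (cmod z1) (cmod z2) >= Num.max (cmod w1) (cmod w2).
Proof.
move=> s0 st t1 z1 z2 w1 w2 Mz Mw.
have del_gt0 : 0 < `|l1 - l2| by rewrite normr_gt0 subr_eq0.
have del_lt := normB_lt_add l1_gt0 l2_gt0.
apply: (eigpair_moduli_mono Mz Mw); rewrite ?detM ?trM ?mulr_gt0 //.
  by rewrite subr_gt0 (le_lt_trans _ del_lt) // ler_piMl // ltW.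
by rewrite ltrD2l ltrN2 ltr_pM2r.
Qed.

Lemma trace_lowering_nonreal : exists z1 z2,
  eigpair (M 1) z1 z2 /\ complex.Im z1 != 0 /\ complex.Im z2 != 0.
Proof.
by apply: eigpair_nonreal; rewrite trM detM mul1r sqr_add_sub_normB_lt.
Qed.

End TraceLoweringFamily.

Theorem lemma3p15 (R : realType) (K eps : R) :
  0 < K -> 0 < eps ->
  exists alpha : R, 0 < alpha /\
  forall (S : topologicalType) (f : S -> S) (A : S -> 'M[R]_2),
    (exists g : S -> S, cancel f g /\ cancel g f /\ continuous f /\ continuous g) ->
    (forall x, A x \in unitmx) ->
    (forall x, exists n, (0 < n)%N /\ iter n f x = x) ->
    (exists K', K' < K /\ forall x, opnorm (A x) <= K' /\ opnorm (invmx (A x)) <= K') ->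
    (forall x p, is_period f x p ->
       exists P D : 'M[R]_2, P \in unitmx /\ is_diag_mx D /\
         retmap p (fun k => A (iter k f x)) = P *m D *m invmx P /\
         0 < D 0 0 /\ 0 < D 1 1 /\ D 0 0 != D 1 1) ->
    forall (X : S) (p : nat), is_period f X p ->
    (exists (l1 l2 : R) (v1 v2 : 'cV[R]_2),
        l1 != l2 /\ v1 != 0 /\ v2 != 0 /\
        retmap p (fun k => A (iter k f X)) *m v1 = l1 *: v1 /\
        retmap p (fun k => A (iter k f X)) *m v2 = l2 *: v2 /\
        angle v1 v2 < alpha) ->
    exists gamma : R -> nat -> 'M[R]_2,
      (forall t, 0 <= t <= 1 -> in_CX p (gamma t)) /\
      (forall t, 0 <= t <= 1 -> forall e, 0 < e -> exists d, 0 < d /\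
         forall s, 0 <= s <= 1 -> `|s - t| < d -> distC p (gamma s) (gamma t) < e) /\
      (* (1) *)
      (forall k, (k < p)%N -> gamma 0 k = A (iter k f X)) /\
      (* (2) *)
      (exists e', e' < eps /\ forall s t, 0 <= s <= 1 -> 0 <= t <= 1 ->
         distC p (gamma s) (gamma t) <= e') /\
      (* (3) *)
      (forall t, 0 <= t <= 1 ->
         \det (retmap p (gamma t)) = \det (retmap p (gamma 0))) /\
      (* (4) *)
      (forall s t, 0 <= s -> s < t -> t <= 1 ->
         forall z1 z2 w1 w2, eigpair (retmap p (gamma s)) z1 z2 ->
           eigpair (retmap p (gamma t)) w1 w2 ->
           Num.min (cmod z1) (cmod z2) <= Num.min (cmod w1) (cmod w2) /\
           Num.max (cmod z1) (cmod z2) >= Num.max (cmod w1) (cmod w2)) /\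
      (* (5) *)
      (exists z1 z2, eigpair (retmap p (gamma 1)) z1 z2 /\
         complex.Im z1 != 0 /\ complex.Im z2 != 0).
Proof.
move=> K_gt0 eps_gt0; have tau_gt0 : 0 < eps / K by rewrite divr_gt0.
exists (angle_bound (eps / K)); split; first exact: angle_bound_gt0.
move=> S f A _ A_unit _ [K' [K'K AK]] diag X p Xp
  [l1 [l2 [v1 [v2 [l12 [v1_neq0 [v2_neq0 [Bv1 [Bv2 small]]]]]]]]].
set s := fun k => A (iter k f X) in Bv1 Bv2 *; set B := retmap p s in Bv1 Bv2 *.
have [n [trN N_lt]] := shear_lowers_trace Bv1 Bv2 l12 v1_neq0
  (cross_lt_of_angle tau_gt0 v1_neq0 v2_neq0 small).
set N := shear n v1 in trN N_lt; have N_nil : N *m N = 0 := shear_nil n v1.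
have [trB detB] := eigvecs_tr_det Bv1 Bv2 l12 v1_neq0 v2_neq0.
have [P [D [P_unit [D_diag [BPD [d0 [d1 _]]]]]]] := diag X p Xp.
have [l1_gt0 l2_gt0] := eigvals_gt0 Bv1 Bv2 l12 v1_neq0 v2_neq0 P_unit D_diag BPD d0 d1.
have [AX_le AXinv_le] : opnorm (s 0%N) <= K /\ opnorm (invmx (s 0%N)) <= K.
  by case: (AK X) => ? ?; split; apply: le_trans (ltW K'K).
have dist_le t1 t2 := distC_shear_path N_nil p t1 t2 (A_unit X) AX_le AXinv_le.
have ret t : retmap p (shear_path s N t) = B *m (1%:M + t *: N).
  by apply: retmap_shear_path; case: Xp.
have trR t : \tr (retmap p (shear_path s N t)) = l1 + l2 - t * `|l1 - l2|.
  by rewrite ret mxtrace_mulmx_unipotent trN trB mulrN.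
have detR t : \det (retmap p (shear_path s N t)) = l1 * l2.
  by rewrite ret det_mulmx det_unipotent_shear mulr1 detB.
have KN_ge0 : 0 <= K * opnorm N by rewrite mulr_ge0 ?opnorm_ge0 ?ltW.
exists (shear_path s N); split.
  by move=> t _; apply: shear_path_in_CX => // k _; exact: A_unit.
split.
  move=> t _ e e_gt0; have [r r_gt0 r_cont] := lipschitz_continuous KN_ge0 dist_le t e_gt0.
  by exists r; split=> // t' _; exact: r_cont.
split; first by move=> k _; rewrite shear_path0.
split.
  exists (K * opnorm N); split=> [|t1 t2 t1_01 t2_01]; first by rewrite mulrC -ltr_pdivlMr.
  by apply: le_trans (dist_le t1 t2) _; rewrite ler_piMl // normB_le1.
split; first by move=> t _; rewrite !detR.
split; first exact: trace_lowering_moduli_mono l1_gt0 l2_gt0 l12 trR detR.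
exact: trace_lowering_nonreal l1_gt0 l2_gt0 l12 trR detR.
Qed.
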